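(* Let $G$ be a finite simple graph with a perfect matching $M$, let $\mathcal{C}$ be an optimal edge $2$-colouring of $G$, and let $\mathcal{F}$, $P$ and the sets $P_j$ ($j\in\mathcal{C}_M$) be as in the context. If $(u,v)\in P_i$ and $(z,w)\in P_j$ for some distinct $i,j\in\mathcal{C}_M$, then the paths $u\mathcal{F}v$ and $z\mathcal{F}w$ do not share an internal vertex.
   Context: $G\setminus M$ is the spanning subgraph with edge set $E(G)\setminus M$, with connected components $C_1,\dots,C_h$. An edge $2$-colouring assigns colours to edges (not necessarily properly) so that each vertex sees at most $2$ distinct colours; optimal means maximum number of colours. $\mathrm{mcl}(u)$ is the colour of the $M$-edge at $u$; $\mathcal{C}_M$ is the set of colours used on $M$ and $\mathcal{C}_N$ the other colours. For a colour $i$, $G[i]$ is the subgraph spanned by edges of colour $i$; for $i\in\mathcal{C}_N$ it is a non-matching colour component, and $k_m$ is the number of non-matching colour components contained in $C_m$. Forests: rooted trees, $r(F)$ roots, $l(F)$ leaves (non-root vertices with no children); each tree has a depth-first indexing $\mathrm{dfs}_T$ (descendants get larger indices) and order $u\preceq_T v$ iff $\mathrm{dfs}_T(u)\ge\mathrm{dfs}_T(v)$; vertices of different trees of a forest are incomparable. $(T_1,T_2)$ is a cascading pair if they are vertex-disjoint or $r(T_2)\in l(T_1)$ and $|V(T_1)\cap V(T_2)|=1$; $\mathcal{F}=\{F_1,\dots,F_l\}$ is a cascading sequence of forests if $V(F_i)\cap V(F_j)=\emptyset$ for $|i-j|\ge2$ and every tree of $F_i$ with every tree of $F_{i+1}$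 forms a cascading pair. $V(\mathcal{F})=\bigcup_F V(F)$; $\mathrm{Int}(\mathcal{F})$ is the set of vertices that are neither a root nor a leaf of some $F\in\mathcal{F}$ containing them. $\preceq_{\mathcal{F}}$ is the transitive closure of ''$x\preceq_F y$ for some $F\in\mathcal{F}$''; $x\mathcal{F}y$ is the path $xFy$ in the forest $F\in\mathcal{F}$ containing an $x$–$y$ path; internal vertices of a path are those other than its endpoints. Standing data: $\mathcal{F}$ is a cascading sequence of forests in $G\setminus M$ with $\sum_F|l(F)|=\sum_{m=1}^h(k_m-1)$, $\mathrm{Int}(\mathcal{F})\cap V(H)=\emptyset$ for every non-matching colour component $H$, and for each $F\in\mathcal{F}$, $u\in r(F)\cup l(F)$, every edge of $F$ at $u$ has colour $\mathrm{mcl}(u)$. $P=\{(u_i,v_i)\}$ is a set of $\sum_m(k_m-1)$ pairs of vertices of $V(\mathcal{F})$ with: (a) the $u_i$ pairwise distinct; (b) $u_i\prec_{\mathcal{F}}v_i$ and $u_i\mathcal{F}v_i$ exists; (c) $\mathrm{mcl}(u_i)=\mathrm{mcl}(v_i)$; (d) $u_i\mathcal{F}v_i$ monochromatic of colour $\mathrm{mcl}(u_i)$; (e) every internal vertex $z$ of $u_i\mathcal{F}v_i$ has $\mathrm{mcl}(z)\ne\mathrm{mcl}(u_i)$; (f) for $i\ne j$ with $u_iv_i,u_jv_j\in M$, the paths $u_i\mathcal{F}v_i$, $u_j\mathcal{F}v_j$ share no internal vertex. For $j\in\mathcal{C}_M$, $P_j=\{(u,v)\in P:\mathrm{mcl}(u)=\mathrm{mcl}(v)=j\}$.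 *)

From mathcomp Require Import all_boot all_order all_algebra.
From Stdlib Require List.
Set Implicit Arguments. Unset Strict Implicit. Unset Printing Implicit Defensive.
Import GRing.Theory.

(* A finite simple graph on the finite vertex type T is given by its edge
   set E : {set {set T}}, every edge being a 2-element set of vertices.
   An edge colouring is any map c : {set T} -> nat (only its values on E
   matter); colours are natural numbers. *)

Definition simple_graph (T : finType) (E : {set {set T}}) : Prop :=
  forall e, e \in E -> #|e| = 2.

Definition perfect_matching (T : finType) (E M : {set {set T}}) : Prop :=
  M \subset E /\ forall x : T, #|[set e in M | x \in e]| = 1.

Definition colours_at (T : finType) (E : {set {set T}}) (c : {set T} -> nat) (x : T)
  : list nat := undup (map c (filter (fun e : {set T} => x \in e) (enum E))).

Definition edge_2_colouring (T : finType) (E : {set {set T}}) (c : {set T} -> nat)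
  : Prop := forall x : T, size (colours_at E c x) <= 2.

Definition colours (T : finType) (E : {set {set T}}) (c : {set T} -> nat) : list nat :=
  undup (map c (enum E)).

Definition ncolours (T : finType) (E : {set {set T}}) (c : {set T} -> nat) : nat :=
  size (colours E c).

Definition optimal_2_colouring (T : finType) (E : {set {set T}}) (c : {set T} -> nat)
  : Prop :=
  edge_2_colouring E c /\
  forall c' : {set T} -> nat, edge_2_colouring E c' -> ncolours E c' <= ncolours E c.

Definition mcl (T : finType) (M : {set {set T}}) (c : {set T} -> nat) (u : T) : nat :=
  match [pick e in M | u \in e] with Some e => c e | None => 0 end.

Definition CM (T : finType) (M : {set {set T}}) (c : {set T} -> nat) : list nat :=
  colours M c.
Definition CN (T : finType) (E M : {set {set T}}) (c : {set T} -> nat) : list nat :=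
  filter (fun i => i \notin CM M c) (colours E c).

Definition colV (T : finType) (E : {set {set T}}) (c : {set T} -> nat) (i : nat)
  : {set T} := [set x | [exists e in E, (c e == i) && (x \in e)]].

Definition adjGM (T : finType) (E M : {set {set T}}) : rel T :=
  fun x y => [set x; y] \in E :\: M.

Definition compsGM (T : finType) (E M : {set {set T}}) : {set {set T}} :=
  [set [set y | connect (adjGM E M) x y] | x : T].

Definition kcomp (T : finType) (E M : {set {set T}}) (c : {set T} -> nat) (C : {set T})
  : nat := count (fun i => colV E c i \subset C) (CN E M c).

Definition sum_k_minus_1 (T : finType) (E M : {set {set T}}) (c : {set T} -> nat) : int :=
  (\sum_(C in compsGM E M) (Posz (kcomp E M c C) - 1))%R.

(* A rooted forest: vertex set, parent function (None for roots), and the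
   depth-first indexing of its trees. *)
Record forest (T : finType) := Forest {
  fV : {set T};
  fpar : T -> option T;
  fdfs : T -> nat }.

Definition dummy_forest (T : finType) : forest T :=
  Forest set0 (fun _ => None) (fun _ => 0).

Fixpoint piter (T : Type) (par : T -> option T) (n : nat) (x : T) : option T :=
  match n with
  | 0 => Some x
  | n'.+1 => match piter par n' x with Some y => par y | None => None end
  end.

Definition anc (T : finType) (F : forest T) (x : T) : {set T} :=
  [set y | [exists n : 'I_#|T|.+1, piter (fpar F) n x == Some y]].

Definition desc (T : finType) (F : forest T) (x : T) : {set T} :=
  [set y in fV F | x \in anc F y].

Definition isroot (T : finType) (F : forest T) (x : T) : bool :=
  (x \in fV F) && (fpar F x == None).

Definition isleaf (T : finType) (F : forest T) (x : T) : bool :=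
  [&& x \in fV F, fpar F x != None &
      [forall y, (y \in fV F) ==> (fpar F y != Some x)]].

Definition sametree (T : finType) (F : forest T) (x y : T) : bool :=
  [&& x \in fV F, y \in fV F &
      [exists r, [&& isroot F r, r \in anc F x & r \in anc F y]]].

Definition treeV (T : finType) (F : forest T) (r : T) : {set T} :=
  [set x in fV F | r \in anc F x].

(* F is a rooted forest in G \ M with a depth-first (preorder) indexing of
   each of its trees *)
Definition forest_in_GM (T : finType) (E M : {set {set T}}) (F : forest T) : Prop :=
  [/\ (forall x p, x \in fV F -> fpar F x = Some p ->
          p \in fV F /\ [set x; p] \in E :\: M),
      (forall x, x \in fV F -> exists2 r, r \in anc F x & fpar F r = None),
      (forall x y, sametree F x y -> fdfs F x = fdfs F y -> x = y) &
      (forall x, x \in fV F ->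
         desc F x = [set y in fV F | sametree F x y &&
                      (fdfs F x <= fdfs F y < fdfs F x + #|desc F x|)])].

Definition leF (T : finType) (F : forest T) (x y : T) : bool :=
  sametree F x y && (fdfs F y <= fdfs F x).

Definition cascading_pair (T : finType) (F1 F2 : forest T) (r1 r2 : T) : bool :=
  [disjoint treeV F1 r1 & treeV F2 r2] ||
  [&& r2 \in treeV F1 r1, isleaf F1 r2 & #|treeV F1 r1 :&: treeV F2 r2| == 1].

Definition cascading_seq (T : finType) (Fs : seq (forest T)) : Prop :=
  (forall i j, i < size Fs -> j < size Fs -> i.+2 <= j ->
     [disjoint fV (nth (dummy_forest T) Fs i) & fV (nth (dummy_forest T) Fs j)]) /\
  (forall i r1 r2, i.+1 < size Fs ->
     isroot (nth (dummy_forest T) Fs i) r1 ->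
     isroot (nth (dummy_forest T) Fs i.+1) r2 ->
     cascading_pair (nth (dummy_forest T) Fs i) (nth (dummy_forest T) Fs i.+1) r1 r2).

Definition VFs (T : finType) (Fs : seq (forest T)) : {set T} :=
  [set x | has (fun F => x \in fV F) Fs].

Definition IntFs (T : finType) (Fs : seq (forest T)) : {set T} :=
  [set x in VFs Fs | ~~ has (fun F => isroot F x || isleaf F x) Fs].

Definition leFs (T : finType) (Fs : seq (forest T)) (x y : T) : bool :=
  connect (fun a b => has (fun F => leF F a b) Fs) x y.

Definition ltFs (T : finType) (Fs : seq (forest T)) (x y : T) : bool :=
  leFs Fs x y && (x != y).

Definition onpath (T : finType) (F : forest T) (x y z : T) : bool :=
  (z \in anc F x :|: anc F y) && (anc F x :&: anc F y \subset anc F z).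

Definition internal (T : finType) (F : forest T) (x y z : T) : bool :=
  [&& onpath F x y z, z != x & z != y].

Definition mono_path (T : finType) (c : {set T} -> nat) (F : forest T) (x y : T) (i : nat)
  : Prop :=
  forall a b, onpath F x y a -> fpar F a = Some b -> onpath F x y b -> c [set a; b] = i.

Definition path_exists (T : finType) (Fs : seq (forest T)) (x y : T) : Prop :=
  exists2 F, List.In F Fs & sametree F x y.

Definition no_common_internal (T : finType) (Fs : seq (forest T)) (x y z w : T) : Prop :=
  forall F F', List.In F Fs -> List.In F' Fs -> sametree F x y -> sametree F' z w ->
  forall a, internal F x y a -> internal F' z w a -> False.

Definition standing_forests (T : finType) (E M : {set {set T}}) (c : {set T} -> nat)
  (Fs : seq (forest T)) : Prop :=
  [/\ (forall F, List.In F Fs -> forest_in_GM E M F),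
      cascading_seq Fs,
      Posz (\sum_(F <- Fs) #|[set x | isleaf F x]|) = sum_k_minus_1 E M c,
      (forall i, i \in CN E M c -> IntFs Fs :&: colV E c i = set0) &
      (forall F u, List.In F Fs -> isroot F u || isleaf F u ->
         (forall p, fpar F u = Some p -> c [set u; p] = mcl M c u) /\
         (forall y, y \in fV F -> fpar F y = Some u -> c [set y; u] = mcl M c u))].

Definition standing_pairs (T : finType) (E M : {set {set T}}) (c : {set T} -> nat)
  (Fs : seq (forest T)) (P : {set T * T}) : Prop :=
  [/\ Posz #|P| = sum_k_minus_1 E M c,
      (forall p, p \in P -> p.1 \in VFs Fs /\ p.2 \in VFs Fs),
      (forall p q, p \in P -> q \in P -> p.1 = q.1 -> p = q),
      (forall p, p \in P -> ltFs Fs p.1 p.2 /\ path_exists Fs p.1 p.2) &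
    [/\ (forall p, p \in P -> mcl M c p.1 = mcl M c p.2),
      (forall p F, p \in P -> List.In F Fs -> sametree F p.1 p.2 ->
                   mono_path c F p.1 p.2 (mcl M c p.1)),
      (* (e) *) (forall p F z, p \in P -> List.In F Fs -> sametree F p.1 p.2 ->
                   internal F p.1 p.2 z -> mcl M c z != mcl M c p.1) &
      (forall p q, p \in P -> q \in P -> p != q ->
                   [set p.1; p.2] \in M -> [set q.1; q.2] \in M ->
                   no_common_internal Fs p.1 p.2 q.1 q.2)]].

Definition Pj (T : finType) (M : {set {set T}}) (c : {set T} -> nat) (P : {set T * T})
  (j : nat) : {set T * T} :=
  [set p in P | (mcl M c p.1 == j) && (mcl M c p.2 == j)].

From Pilot Require Import Defs.
From mathcomp Require Import all_boot all_order all_algebra.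
From mathcomp Require Import zify.

Set Implicit Arguments.
Unset Strict Implicit.
Unset Printing Implicit Defensive.

(* An internal vertex [a] of [u F v] is a proper ancestor of [u] or of [v], so the
   edge from [a] down to its child on that side is a path edge and [a] sees the
   colour [i] of the monochromatic path.  Likewise [a] sees [j] on [z F' w], and
   it sees [mcl a] on its matching edge, which differs from [i] and [j] by
   property (e).  Three distinct colours at [a] contradict the 2-colouring. *)

Section ParentIteration.
Variables (T : finType) (par : T -> option T).

Lemma piter_add m n x :
  piter par (m + n) x = if piter par n x is Some y then piter par m y else None.
Proof.
elim: m => [|m IH] /=; first by case: (piter par n x).
by rewrite IH; case: (piter par n x).
Qed.

Lemma piter_some_leq m n x y :
  m <= n -> piter par n x = Some y -> exists t, piter par m x = Some t.
Proof.
move=> le_mn; case Hm: (piter par m x) => [t|]; first by exists t.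
by rewrite -(subnK le_mn) piter_add Hm.
Qed.

(* Pigeonhole: among the #|T|.+1 iterates of index at most #|T| two coincide,
   and the cycle between them can be cut out. *)
Lemma piter_short n x y :
  piter par n x = Some y -> exists2 k, k < #|T| & piter par k x = Some y.
Proof.
elim/ltn_ind: n => n IH Hn.
have [lt_n|ge_n] := ltnP n #|T|; first by exists n.
pose f (k : 'I_#|T|.+1) := odflt x (piter par k x).
have f_iter (k : 'I_#|T|.+1) : piter par k x = Some (f k).
  have [t Ht] := piter_some_leq (leq_trans (ltn_ord k : k <= #|T|) ge_n) Hn.
  by rewrite /f Ht.
have /injectivePn [i [j neq_ij fij]] : ~~ injectiveb f.
  by apply/injectiveP => /leq_card; rewrite card_ord ltnn.
wlog lt_ij : i j neq_ij fij / i < j.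
  move=> W; case: (ltngtP i j) => [|lt_ji|/val_inj eq_ij]; first exact: W.
  - by apply: (W j i) => //; rewrite eq_sym.
  - by rewrite eq_ij eqxx in neq_ij.
have le_jn : j <= n by apply: leq_trans ge_n; rewrite -ltnS.
apply: (IH (n - j + i)); first lia.
by rewrite piter_add f_iter fij -Hn -[in RHS](subnK le_jn) piter_add f_iter.
Qed.

End ParentIteration.

Section Ancestors.
Variable T : finType.
Implicit Types (F : forest T) (x y a : T).

Lemma ancP F x y :
  reflect (exists n, piter (fpar F) n x = Some y) (y \in anc F x).
Proof.
apply: (iffP idP); first by rewrite inE => /existsP [n /eqP]; exists n.
case=> n /piter_short [k lt_k Hk]; rewrite inE; apply/existsP.
by exists (Ordinal (ltnW lt_k : k < #|T|.+1)); rewrite /= Hk.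
Qed.

Lemma anc_in_fV (E M : {set {set T}}) F x y :
  forest_in_GM E M F -> x \in fV F -> y \in anc F x -> y \in fV F.
Proof.
case=> par_edge _ _ _ xF /ancP [n]; elim: n y => [|n IH] y /=; first by case=> <-.
case Hn: (piter (fpar F) n x) => [t|] // par_t.
by have [] := par_edge t y (IH t Hn) par_t.
Qed.

Lemma anc_child F x a :
  a \in anc F x -> a != x ->
  exists ch, [/\ ch \in anc F x, fpar F ch = Some a & anc F a \subset anc F ch].
Proof.
case/ancP=> [[|n] /=]; first by case=> ->; rewrite eqxx.
case Hn: (piter (fpar F) n x) => [ch|] // par_ch _.
exists ch; split => //; first by apply/ancP; exists n.
apply/subsetP => y /ancP [m Hm]; apply/ancP.
by exists (m + 1); rewrite piter_add /= par_ch.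
Qed.

End Ancestors.

Section ColoursAtVertex.
Variables (T : finType) (E M : {set {set T}}) (c : {set T} -> nat).

Lemma mem_colours_at e x : e \in E -> x \in e -> c e \in colours_at E c x.
Proof. by move=> eE xe; rewrite mem_undup map_f // mem_filter xe mem_enum. Qed.

Lemma mcl_mem_colours_at x : perfect_matching E M -> mcl M c x \in colours_at E c x.
Proof.
case=> sME matched; rewrite /mcl; case: pickP => [e /andP [eM xe] | none].
  exact: mem_colours_at (subsetP sME e eM) xe.
have := matched x.
by rewrite (eq_card0 (A := [set e in M | x \in e])) // => e; rewrite inE none.
Qed.

Lemma colour_of_internal_vertex (F : forest T) u v a i :
  forest_in_GM E M F -> u \in fV F -> v \in fV F ->
  internal F u v a -> Defs.mono_path c F u v i -> i \in colours_at E c a.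
Proof.
move=> FGM uF vF /and3P [/andP [a_uv sub_a] a_u a_v] mono.
suff below x : x \in fV F -> a \in anc F x -> a != x ->
    anc F x \subset anc F u :|: anc F v -> i \in colours_at E c a.
  by move: a_uv; rewrite inE => /orP [] ?; [apply: (below u) | apply: (below v)];
    rewrite ?subsetUl ?subsetUr.
move=> xF a_x a_x' sub_x.
have [ch [ch_x par_ch sub_ch]] := anc_child a_x a_x'.
have chF := anc_in_fV FGM xF ch_x.
have [par_edge _ _ _] := FGM.
have [_] := par_edge ch a chF par_ch; rewrite inE => /andP [_ ch_a_E].
have <- : c [set ch; a] = i.
  apply: mono par_ch _; last exact/andP.
  by rewrite /onpath (subsetP sub_x) ?(subset_trans sub_a sub_ch).
by apply: mem_colours_at ch_a_E _; rewrite !inE eqxx orbT.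
Qed.

Lemma size_sub_colours_at x (s : seq nat) :
  edge_2_colouring E c -> uniq s -> {subset s <= colours_at E c x} -> size s <= 2.
Proof. by move=> col s_uniq /(uniq_leq_size s_uniq) /leq_trans; apply. Qed.

End ColoursAtVertex.

Theorem lemma10 (T : finType) (E M : {set {set T}}) (c : {set T} -> nat)
  (Fs : seq (forest T)) (P : {set T * T}) :
  simple_graph E ->
  perfect_matching E M ->
  optimal_2_colouring E c ->
  standing_forests E M c Fs ->
  standing_pairs E M c Fs P ->
  forall (i j : nat) (u v z w : T),
    i \in CM M c -> j \in CM M c -> i != j ->
    (u, v) \in Pj M c P i -> (z, w) \in Pj M c P j ->
    no_common_internal Fs u v z w.
Proof.
move=> _ matching [col _] [FsGM _ _ _ _] [_ _ _ _ [_ mono_P mcl_P _]] i j u v z w _ _ ij.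
rewrite !inE /= => /andP [uvP /andP [/eqP mcl_u _]] /andP [zwP /andP [/eqP mcl_z _]].
move=> F F' FFs F'Fs uvF zwF' a a_uv a_zw.
have [/and3P [uF vF _] /and3P [zF wF _]] := conj uvF zwF'.
have mono_uv := mono_P (u, v) F uvP FFs uvF; rewrite /= mcl_u in mono_uv.
have mono_zw := mono_P (z, w) F' zwP F'Fs zwF'; rewrite /= mcl_z in mono_zw.
have i_a := colour_of_internal_vertex (FsGM F FFs) uF vF a_uv mono_uv.
have j_a := colour_of_internal_vertex (FsGM F' F'Fs) zF wF a_zw mono_zw.
have a_i : mcl M c a != i by rewrite -mcl_u (mcl_P (u, v) F a).
have a_j : mcl M c a != j by rewrite -mcl_z (mcl_P (z, w) F' a).
have uniq_ija : uniq [:: i; j; mcl M c a].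
  by rewrite /= !inE negb_or ij eq_sym a_i eq_sym a_j.
have sub_ija : {subset [:: i; j; mcl M c a] <= colours_at E c a}.
  by apply/allP; rewrite /= i_a j_a mcl_mem_colours_at.
by have := size_sub_colours_at col uniq_ija sub_ija.
Qed.
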